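(* Let $A\ge0$ and let $\lambda$ be a composition whose first run has length at most $A$, having at least one run other than its first and last runs, and let $M$ be the maximal length of such an interior run; assume $M>2$. Then for all $x\in[0,1]$, $$\sup_{t\in[0,1]}\big|F_{X_I\mid X_F=x}(t)-F_{X_I}(t)\big|\le\frac{4A^2}{M-2},$$ in the continuous model associated with $\lambda$.
   Context: A composition $\lambda$ of $n$ is a finite sequence of positive integers $(\lambda_1,\dots,\lambda_k)$ with $\sum_j\lambda_j=n$; its descent set is $D_\lambda=\{\lambda_1,\lambda_1+\lambda_2,\dots,\lambda_1+\dots+\lambda_{k-1}\}\subseteq\{1,\dots,n-1\}$. The continuous model associated with $\lambda$: $(x_1,\dots,x_n)$ uniformly distributed on $P_\lambda=\{x\in[0,1]^n:\ x_i\ge x_{i+1}\text{ if }i\in D_\lambda,\ x_i\le x_{i+1}\text{ if }i\notin D_\lambda,\ 1\le i\le n-1\}$, with $X_I=x_1$, $X_F=x_n$. A run of $\lambda$ is a maximal set of consecutive cells $\{a,\dots,b\}$, $b\ge a+1$, such that either $\{a,\dots,b-1\}\cap D_\lambda=\emptyset$ or $\{a,\dots,b-1\}\subseteq D_\lambda$; its length is $b-a+1$. The first (resp. last) run is the one containing cell $1$ (resp. $n$). $F_{X_I}$ is the cumulative distribution function of $X_I$ and $F_{X_I\mid X_F=x}$ the conditional one given $X_F=x$. *)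

From Stdlib Require Import Reals Lra Lia Arith List ClassicalEpsilon.
Open Scope R_scope.

Definition is_composition (lam : list nat) : Prop := Forall (fun k => (0 < k)%nat) lam.

Definition csize (lam : list nat) : nat := fold_right Nat.add 0%nat lam.

Definition descent (lam : list nat) (i : nat) : Prop :=
  exists k, (1 <= k < length lam)%nat /\ i = csize (firstn k lam).

Definition uniform_block (lam : list nat) (a b : nat) : Prop :=
  (1 <= a < b)%nat /\ (b <= csize lam)%nat /\
  ((forall i, (a <= i < b)%nat -> ~ descent lam i) \/
   (forall i, (a <= i < b)%nat -> descent lam i)).

(* a run {a,...,b}: a maximal uniform block of consecutive cells *)
Definition is_run (lam : list nat) (a b : nat) : Prop :=
  uniform_block lam a b /\
  (forall a' b', (a' <= a)%nat -> (b <= b')%nat -> uniform_block lam a' b' ->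
     a' = a /\ b' = b).

Definition run_length (a b : nat) : nat := (b - a + 1)%nat.

Definition is_first_run (lam : list nat) (a b : nat) : Prop := is_run lam a b /\ a = 1%nat.
Definition is_last_run (lam : list nat) (a b : nat) : Prop := is_run lam a b /\ b = csize lam.
Definition is_interior_run (lam : list nat) (a b : nat) : Prop :=
  is_run lam a b /\ a <> 1%nat /\ b <> csize lam.

(* ---------- The polytope P_lambda (points are 1-indexed: v 1, ..., v n) ---------- *)

Definition in_P (lam : list nat) (v : nat -> R) : Prop :=
  (forall i, (1 <= i <= csize lam)%nat -> 0 <= v i <= 1) /\
  (forall i, (1 <= i)%nat -> (i + 1 <= csize lam)%nat ->
     (descent lam i -> v (S i) <= v i) /\ (~ descent lam i -> v i <= v (S i))).

Definition ind (P : Prop) : R := if excluded_middle_informative P then 1 else 0.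

(* Riemann integral of f over [a,b] (0 if f is not Riemann integrable) *)
Definition RInt (f : R -> R) (a b : R) : R :=
  match excluded_middle_informative (inhabited (Riemann_integrable f a b)) with
  | left H => RiemannInt (epsilon H (fun _ => True))
  | right _ => 0
  end.

Definition upd (v : nat -> R) (j : nat) (y : R) : nat -> R :=
  fun i => if Nat.eqb i j then y else v i.

Fixpoint iint (k : nat) (F : (nat -> R) -> R) : R :=
  match k with
  | O => F (fun _ => 0)
  | S k' => RInt (fun y => iint k' (fun v => F (upd v (S k') y))) 0 1
  end.

(* F_{X_I}(t) = P(x_1 <= t) for x uniform on P_lambda *)
Definition cdf_XI (lam : list nat) (t : R) : R :=
  iint (csize lam) (fun v => ind (in_P lam v /\ v 1%nat <= t)) /
  iint (csize lam) (fun v => ind (in_P lam v)).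

(* (unnormalised) density of X_F at x, restricted to x_1 <= t *)
Definition slice_dens (lam : list nat) (x t : R) : R :=
  iint (csize lam - 1) (fun v => ind (in_P lam (upd v (csize lam) x) /\
                                      upd v (csize lam) x 1%nat <= t)).

(* density of X_F at x (up to the normalising constant 1/vol P_lambda) *)
Definition dens_XF (lam : list nat) (x : R) : R :=
  iint (csize lam - 1) (fun v => ind (in_P lam (upd v (csize lam) x))).

Definition cdf_XI_given_XF (lam : list nat) (x t : R) : R :=
  slice_dens lam x t / dens_XF lam x.

(* Integrating out x_1, x_2, ... in turn yields densities h_k^t of x_(k+1) restricted to x_1 <= t:
   h_(k+1)^t(s) is the integral of h_k^t over [s, 1] or over [0, s], according to whether k + 1 is
   a descent. Then F_(X_I | X_F = x)(t) = h_(n-1)^t(x) / h_(n-1)^1(x), and F_(X_I)(t) is the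
   ratio of the integrals of these two densities.
   Across an interior run with m steps, h^t becomes an m-fold repeated integral of the density f^t
   at the start of the run. By Cauchy's formula, m! times it lies between (1 - s^m) times the
   moments of f^t against (1 - z)^m and (1 - z)^(m-1); since f^1 is monotone, Chebyshev's
   inequality compares these two moments of f^1 and pinches h^t between c h^1 and C h^1 with
   C - c <= 2/m. The remaining integration steps are positive and linear, so the pinching persists
   up to h_(n-1), and both distribution functions lie in [c, C]. Finally every run has length at
   least 2, so A >= 2 and 2/m <= 4 A^2 / (M - 2) with M = m + 1. *)

From Pilot Require Import Defs.
From Stdlib Require Import Reals List Lra Lia ClassicalEpsilon FunctionalExtensionality Classical.
From Coquelicot Require Import Coquelicot.
Open Scope R_scope.

(** * Riemann integrals on [R] *)

(* Coquelicot's [RInt] at type [R]: its own statements live in a normed module, where [ring] and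
   [lra] do not apply. *)
Definition integral (f : R -> R) (a b : R) : R := RInt f a b.

Lemma integral_scal (f : R -> R) a b c :
  ex_RInt f a b -> integral (fun x => c * f x) a b = c * integral f a b.
Proof. exact (RInt_scal f a b c). Qed.

Lemma integral_minus (f g : R -> R) a b : ex_RInt f a b -> ex_RInt g a b ->
  integral (fun x => f x - g x) a b = integral f a b - integral g a b.
Proof. exact (RInt_minus f g a b). Qed.

Lemma integral_Chasles (f : R -> R) a b c : ex_RInt f a b -> ex_RInt f b c ->
  integral f a b + integral f b c = integral f a c.
Proof. exact (RInt_Chasles f a b c). Qed.

Lemma integral_const a b c : integral (fun _ => c) a b = (b - a) * c.
Proof. exact (RInt_const a b c). Qed.

Lemma integral_point (f : R -> R) a : integral f a a = 0.
Proof. exact (RInt_point a f). Qed.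

Lemma integral_ext (f g : R -> R) a b :
  (forall x, Rmin a b < x < Rmax a b -> f x = g x) -> integral f a b = integral g a b.
Proof. exact (RInt_ext f g a b). Qed.

Lemma integral_le (f g : R -> R) a b : a <= b -> ex_RInt f a b -> ex_RInt g a b ->
  (forall x, a < x < b -> f x <= g x) -> integral f a b <= integral g a b.
Proof. exact (RInt_le f g a b). Qed.

Lemma integral_ge0 (f : R -> R) a b : a <= b -> ex_RInt f a b ->
  (forall x, a < x < b -> 0 <= f x) -> 0 <= integral f a b.
Proof. exact (RInt_ge_0 f a b). Qed.

Lemma ex_RInt_ext_R (f g : R -> R) a b :
  (forall x, Rmin a b < x < Rmax a b -> f x = g x) -> ex_RInt f a b -> ex_RInt g a b.
Proof. exact (ex_RInt_ext f g a b). Qed.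

Lemma ex_RInt_scal_R (f : R -> R) a b c : ex_RInt f a b -> ex_RInt (fun x => c * f x) a b.
Proof. exact (ex_RInt_scal f a b c). Qed.

Lemma Defs_RInt_eq_integral (f : R -> R) a b : ex_RInt f a b -> Defs.RInt f a b = integral f a b.
Proof.
  intros H. unfold Defs.RInt.
  destruct (excluded_middle_informative _) as [Hi|Hn].
  - symmetry. apply RInt_Reals.
  - exfalso. apply Hn. constructor. now apply ex_RInt_Reals_0.
Qed.

Lemma Defs_RInt_not_integrable (f : R -> R) a b : ~ ex_RInt f a b -> Defs.RInt f a b = 0.
Proof.
  intros H. unfold Defs.RInt.
  destruct (excluded_middle_informative _) as [[Hi]|Hn]; auto.
  exfalso. apply H. now apply ex_RInt_Reals_1.
Qed.

Lemma Defs_RInt_mult_r (f : R -> R) a b c :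
  Defs.RInt (fun y => f y * c) a b = Defs.RInt f a b * c.
Proof.
  destruct (Req_dec c 0) as [->|Hc].
  - rewrite Rmult_0_r, Defs_RInt_eq_integral.
    + rewrite (integral_ext _ (fun _ => 0)) by (intros; ring). rewrite integral_const. ring.
    + apply (ex_RInt_ext_R (fun _ => 0)); [intros; ring|apply ex_RInt_const].
  - assert (Hiff : ex_RInt (fun y => f y * c) a b <-> ex_RInt f a b).
    { split; intros H.
      - apply (ex_RInt_ext_R (fun y => / c * (f y * c))); [intros; field; exact Hc|].
        now apply ex_RInt_scal_R.
      - apply (ex_RInt_ext_R (fun y => c * f y)); [intros; ring|].
        now apply ex_RInt_scal_R. }
    destruct (classic (ex_RInt f a b)) as [H|H].
    + rewrite !Defs_RInt_eq_integral by (exact H || now apply Hiff).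
      rewrite (integral_ext _ (fun y => c * f y)) by (intros; ring).
      rewrite integral_scal by exact H. ring.
    + rewrite !Defs_RInt_not_integrable by (rewrite ?Hiff; exact H). ring.
Qed.

Lemma iint_mult_r k : forall (F : (nat -> R) -> R) c, iint k (fun v => F v * c) = iint k F * c.
Proof.
  induction k as [|k IH]; intros F c; simpl; [reflexivity|].
  rewrite <- Defs_RInt_mult_r. f_equal. apply functional_extensionality. intros y. apply IH.
Qed.

(** * Integrating out the first coordinates *)

Lemma ind_and (P Q : Prop) : Defs.ind (P /\ Q) = Defs.ind P * Defs.ind Q.
Proof.
  unfold Defs.ind. destruct (excluded_middle_informative (P /\ Q)), (excluded_middle_informative P),
    (excluded_middle_informative Q); try ring; tauto.
Qed.

Lemma ind_iff (P Q : Prop) : (P <-> Q) -> Defs.ind P = Defs.ind Q.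
Proof.
  intros H. unfold Defs.ind.
  destruct (excluded_middle_informative P), (excluded_middle_informative Q); tauto.
Qed.

Definition step_rel (lam : list nat) (i : nat) (a b : R) : Prop :=
  (descent lam i -> b <= a) /\ (~ descent lam i -> a <= b).

Definition prefix_ok (lam : list nat) (t : R) (k : nat) (u : nat -> R) : Prop :=
  ((1 <= k)%nat -> u 1%nat <= t) /\
  (forall i, (1 <= i <= k)%nat -> 0 <= u i <= 1) /\
  (forall i, (1 <= i <= k)%nat -> step_rel lam i (u i) (u (S i))).

(* Coordinate [k + 1] takes the value [y], coordinate [k + 2] the value [s]. *)
Definition link_ok (lam : list nat) (t : R) (k : nat) (y s : R) : Prop :=
  ((k = 0)%nat -> y <= t) /\ 0 <= y <= 1 /\ step_rel lam (S k) y s.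

Fixpoint prefix_weight (lam : list nat) (t : R) (k : nat) : R -> R :=
  match k with
  | O => fun _ => 1
  | S k' => fun s =>
      Defs.RInt (fun y => prefix_weight lam t k' y * Defs.ind (link_ok lam t k' y s)) 0 1
  end.

Definition glue (k : nat) (v w : nat -> R) : nat -> R := fun i => if Nat.leb i k then v i else w i.

Lemma prefix_ok_S lam t k u :
  prefix_ok lam t (S k) u <-> prefix_ok lam t k u /\ link_ok lam t k (u (S k)) (u (S (S k))).
Proof.
  unfold prefix_ok, link_ok. split.
  - intros [H1 [H2 H3]].
    split; [split; [intros; apply H1; lia|split; intros i Hi; [apply H2|apply H3]; lia]|].
    split; [intros ->; apply H1; lia|split; [apply H2|apply H3]; lia].
  - intros [[H1 [H2 H3]] [H4 [H5 H6]]]. split; [|split].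
    + intros _. destruct k; [now apply H4|]. apply H1; lia.
    + intros i Hi. destruct (Nat.eq_dec i (S k)) as [->|]; [exact H5|]. apply H2; lia.
    + intros i Hi. destruct (Nat.eq_dec i (S k)) as [->|]; [exact H6|]. apply H3; lia.
Qed.

Lemma glue_upd k v w y : glue (S k) (upd v (S k) y) w = glue k v (upd w (S k) y).
Proof.
  apply functional_extensionality. intros i. unfold glue, upd.
  destruct (Nat.leb_spec i (S k)), (Nat.leb_spec i k), (Nat.eqb_spec i (S k)); auto; lia.
Qed.

Lemma iint_prefix_ok lam t k : forall w,
  iint k (fun v => Defs.ind (prefix_ok lam t k (glue k v w))) = prefix_weight lam t k (w (S k)).
Proof.
  induction k as [|k IH]; intros w; simpl.
  - unfold Defs.ind. destruct (excluded_middle_informative _) as [|n]; [reflexivity|].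
    exfalso. apply n. repeat split; intros; lia.
  - f_equal. apply functional_extensionality. intros y.
    set (w' := upd w (S k) y).
    transitivity (iint k (fun v => Defs.ind (prefix_ok lam t k (glue k v w')) *
                                   Defs.ind (link_ok lam t k y (w (S (S k)))))).
    + f_equal. apply functional_extensionality. intros v.
      rewrite glue_upd, <- ind_and. apply ind_iff. rewrite prefix_ok_S.
      fold w'. unfold glue at 2 3, w', upd.
      destruct (Nat.leb_spec (S k) k), (Nat.leb_spec (S (S k)) k); try lia.
      rewrite Nat.eqb_refl. destruct (Nat.eqb_spec (S (S k)) (S k)); [lia|]. tauto.
    + rewrite iint_mult_r, IH. unfold w', upd. now rewrite Nat.eqb_refl.
Qed.

Lemma in_P_upd_last_iff lam t n v y : csize lam = S n -> (1 <= n)%nat -> 0 <= y <= 1 ->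
  (in_P lam (upd v (S n) y) /\ upd v (S n) y 1%nat <= t) <->
  prefix_ok lam t n (glue n v (upd (fun _ => 0) (S n) y)).
Proof.
  intros Hn Hn1 Hy.
  set (u1 := upd v (S n) y). set (u2 := glue n v (upd (fun _ => 0) (S n) y)).
  assert (Hu : forall i, (i <= S n)%nat -> u1 i = u2 i).
  { intros i Hi. unfold u1, u2, upd, glue.
    destruct (Nat.leb_spec i n), (Nat.eqb_spec i (S n)); auto; lia. }
  unfold in_P, prefix_ok, step_rel. rewrite Hn. split.
  - intros [[H1 H2] H3]. split; [|split].
    + intros _. rewrite <- Hu by lia. exact H3.
    + intros i Hi. rewrite <- Hu by lia. apply H1; lia.
    + intros i Hi. rewrite <- !Hu by lia. apply H2; lia.
  - intros [H1 [H2 H3]]. split; [split|].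
    + intros i Hi. destruct (Nat.eq_dec i (S n)) as [->|].
      * unfold u1, upd. now rewrite Nat.eqb_refl.
      * rewrite Hu by lia. apply H2; lia.
    + intros i Hi Hi2. rewrite !Hu by lia. apply H3; lia.
    + rewrite Hu by lia. apply H1; lia.
Qed.

Lemma slice_dens_prefix_weight lam t n y : csize lam = S n -> (1 <= n)%nat -> 0 <= y <= 1 ->
  slice_dens lam y t = prefix_weight lam t n y.
Proof.
  intros Hn Hn1 Hy. unfold slice_dens. rewrite Hn, Nat.sub_succ, Nat.sub_0_r.
  set (w := upd (fun _ => 0) (S n) y).
  transitivity (prefix_weight lam t n (w (S n))).
  2: unfold w, upd; now rewrite Nat.eqb_refl.
  rewrite <- iint_prefix_ok. f_equal. apply functional_extensionality. intros v.
  apply ind_iff. now apply in_P_upd_last_iff.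
Qed.

Lemma dens_XF_slice_dens lam y : (1 <= csize lam)%nat -> dens_XF lam y = slice_dens lam y 1.
Proof.
  intros Hn. unfold dens_XF, slice_dens. f_equal. apply functional_extensionality. intros v.
  apply ind_iff. split; [|tauto]. intros H. split; [exact H|]. apply (proj1 H). lia.
Qed.

(** * The chain of densities in closed form *)

Definition cont (h : R -> R) : Prop := forall x, continuous h x.

Lemma cont_ex_RInt h a b : cont h -> ex_RInt h a b.
Proof.
  intros Hc. exact (ex_RInt_continuous (V := R_CompleteNormedModule) h a b (fun z _ => Hc z)).
Qed.

Lemma cont_const c : cont (fun _ => c).
Proof. intros x. apply continuous_const. Qed.

Lemma cont_id : cont (fun x => x).
Proof. intros x. apply continuous_id. Qed.

Lemma cont_mult f g : cont f -> cont g -> cont (fun x => f x * g x).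
Proof. intros Hf Hg x. apply (continuous_mult (K := R_AbsRing)); auto. Qed.

Lemma cont_minus f g : cont f -> cont g -> cont (fun x => f x - g x).
Proof. intros Hf Hg x. apply (continuous_minus (V := R_NormedModule)); auto. Qed.

Lemma cont_pow f n : cont f -> cont (fun x => f x ^ n).
Proof. intros Hf. induction n; simpl; [apply cont_const|now apply cont_mult]. Qed.

Lemma cont_comp f g : cont f -> cont g -> cont (fun x => g (f x)).
Proof. intros Hf Hg x. now apply continuous_comp. Qed.

Lemma cont_of_derive f : (forall x, exists l, is_derive f x l) -> cont f.
Proof.
  intros H x. destruct (H x) as [l Hl].
  apply (ex_derive_continuous (K := R_AbsRing) (V := R_NormedModule)). now exists l.
Qed.

Ltac solve_cont := repeat match goal with
  | H : cont ?h |- cont ?h => exact H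
  | H : cont ?h |- cont (fun x => ?h x) => exact H
  | |- cont (fun x => x) => apply cont_id
  | |- cont (fun x => ?c) => apply cont_const
  | |- cont (fun x => @?a x * @?b x) => apply (cont_mult a b)
  | |- cont (fun x => @?a x - @?b x) => apply (cont_minus a b)
  | |- cont (fun x => @?a x ^ ?n) => apply (cont_pow a n)
  end.

Lemma is_derive_integral h x : cont h -> is_derive (fun b => integral h 0 b) x (h x).
Proof.
  intros Hc. apply (is_derive_RInt h (fun b => RInt h 0 b) 0); [|apply Hc].
  apply filter_forall. intros b.
  exact (RInt_correct (V := R_CompleteNormedModule) h 0 b (cont_ex_RInt h 0 b Hc)).
Qed.

Lemma integral_from0 h a b : cont h -> integral h a b = integral h 0 b - integral h 0 a.
Proof. intros Hc. rewrite <- (integral_Chasles h 0 a b) by now apply cont_ex_RInt. ring. Qed.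

Definition nonexpansive (phi : R -> R) : Prop := forall x y, Rabs (phi x - phi y) <= Rabs (x - y).

Lemma nonexpansive_cont phi : nonexpansive phi -> cont phi.
Proof.
  intros Hphi x. apply continuity_pt_filterlim. intros eps Heps. exists eps. split; [exact Heps|].
  intros y [_ Hy]. simpl in *. unfold R_dist in *. eapply Rle_lt_trans; [apply Hphi|exact Hy].
Qed.

Lemma cont_integral_bounds h p q :
  cont h -> nonexpansive p -> nonexpansive q -> cont (fun s => integral h (p s) (q s)).
Proof.
  intros Hc Hp Hq.
  assert (Hprim : cont (fun b => integral h 0 b)).
  { apply cont_of_derive. intros x. eexists. now apply is_derive_integral. }
  intros x. apply (continuous_ext (fun s => integral h 0 (q s) - integral h 0 (p s))).
  { intros s. symmetry. now apply integral_from0. }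
  apply cont_minus; apply cont_comp; auto using nonexpansive_cont.
Qed.

Definition clamp (x : R) : R := Rmax 0 (Rmin 1 x).

Lemma clamp_id x : 0 <= x <= 1 -> clamp x = x.
Proof. intros. unfold clamp, Rmax, Rmin. repeat destruct Rle_dec; lra. Qed.

Lemma clamp_range x : 0 <= clamp x <= 1.
Proof. unfold clamp, Rmax, Rmin. repeat destruct Rle_dec; lra. Qed.

Lemma nonexpansive_const c : nonexpansive (fun _ => c).
Proof. intros x y. rewrite Rminus_diag, Rabs_R0. apply Rabs_pos. Qed.

Lemma nonexpansive_clamp : nonexpansive clamp.
Proof.
  intros x y. unfold clamp, Rmax, Rmin. repeat destruct Rle_dec; unfold Rabs;
    repeat destruct Rcase_abs; lra.
Qed.

Lemma nonexpansive_max_clamp c : nonexpansive (fun s => Rmax (clamp s) c).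
Proof.
  intros x y. pose proof (nonexpansive_clamp x y) as Hxy. revert Hxy.
  generalize (clamp x) (clamp y).
  intros a b. unfold Rmax. repeat destruct Rle_dec; unfold Rabs; repeat destruct Rcase_abs; lra.
Qed.

Lemma nonexpansive_min_clamp c : nonexpansive (fun s => Rmin (clamp s) c).
Proof.
  intros x y. pose proof (nonexpansive_clamp x y) as Hxy. revert Hxy.
  generalize (clamp x) (clamp y).
  intros a b. unfold Rmin. repeat destruct Rle_dec; unfold Rabs; repeat destruct Rcase_abs; lra.
Qed.

(* The constraint [x_1 <= t] only bounds the coordinate integrated first. *)
Definition cutoff (t : R) (k : nat) : R := match k with O => t | _ => 1 end.

(* Closed form of [prefix_weight] on [0, 1], extended by clamping so as to be continuous on [R]. *)
Fixpoint chain_dens (lam : list nat) (t : R) (k : nat) : R -> R :=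
  match k with
  | O => fun _ => 1
  | S k' => fun s =>
      if excluded_middle_informative (descent lam (S k'))
      then integral (chain_dens lam t k') (clamp s) (Rmax (clamp s) (cutoff t k'))
      else integral (chain_dens lam t k') 0 (Rmin (clamp s) (cutoff t k'))
  end.

Lemma chain_dens_cont lam t k : cont (chain_dens lam t k).
Proof.
  induction k as [|k IH]; simpl; [apply cont_const|].
  destruct (excluded_middle_informative _); apply cont_integral_bounds; auto using
    nonexpansive_clamp, nonexpansive_const, nonexpansive_max_clamp, nonexpansive_min_clamp.
Qed.

Lemma chain_dens_ex_RInt lam t k a b : ex_RInt (chain_dens lam t k) a b.
Proof. apply cont_ex_RInt, chain_dens_cont. Qed.

Lemma chain_dens_S lam t k s : cutoff t k = 1 ->
  chain_dens lam t (S k) s =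
  if excluded_middle_informative (descent lam (S k))
  then integral (chain_dens lam t k) (clamp s) 1
  else integral (chain_dens lam t k) 0 (clamp s).
Proof.
  intros Hcut. simpl. rewrite Hcut. pose proof (clamp_range s).
  rewrite Rmax_right, Rmin_left by lra. reflexivity.
Qed.

Lemma cutoff_1 k : cutoff 1 k = 1.
Proof. now destruct k. Qed.

Lemma chain_dens_ge0 lam t k s : 0 <= t <= 1 -> 0 <= chain_dens lam t k s.
Proof.
  intros Ht. revert s. induction k as [|k IH]; intros s; simpl; [lra|].
  pose proof (clamp_range s).
  assert (0 <= cutoff t k <= 1) by (destruct k; simpl; lra).
  destruct (excluded_middle_informative _); apply integral_ge0; auto using chain_dens_ex_RInt.
  - apply Rmax_l.
  - apply Rmin_glb; lra.
Qed.

Lemma chain_dens_le lam t k s : 0 <= t <= 1 -> chain_dens lam t k s <= chain_dens lam 1 k s.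
Proof.
  intros Ht. revert s. induction k as [|k IH]; intros s; [simpl; lra|].
  pose proof (clamp_range s). destruct k.
  - simpl. destruct (excluded_middle_informative _); rewrite !integral_const.
    + unfold Rmax. repeat destruct Rle_dec; lra.
    + unfold Rmin. repeat destruct Rle_dec; lra.
  - rewrite !chain_dens_S by reflexivity.
    destruct (excluded_middle_informative _); apply integral_le;
      auto using chain_dens_ex_RInt; lra.
Qed.

Lemma Defs_RInt_window (h g : R -> R) (P : R -> Prop) c1 c2 : cont h -> 0 <= c1 <= c2 -> c2 <= 1 ->
  (forall y, c1 < y < c2 -> g y = h y /\ P y) ->
  (forall y, 0 < y < c1 \/ c2 < y < 1 -> ~ P y) ->
  Defs.RInt (fun y => g y * Defs.ind (P y)) 0 1 = integral h c1 c2.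
Proof.
  intros Hc Hc1 Hc2 Hin Hout.
  set (phi := fun y => g y * Defs.ind (P y)).
  assert (Hzero : forall y, 0 < y < c1 \/ c2 < y < 1 -> phi y = 0).
  { intros y Hy. unfold phi, Defs.ind.
    destruct (excluded_middle_informative _) as [HP|]; [now destruct (Hout y Hy)|ring]. }
  assert (Hmid : forall y, c1 < y < c2 -> phi y = h y).
  { intros y Hy. unfold phi, Defs.ind. destruct (Hin y Hy) as [-> HP].
    destruct (excluded_middle_informative _); [ring|contradiction]. }
  assert (X1 : ex_RInt phi 0 c1).
  { apply (ex_RInt_ext_R (fun _ => 0)); [|apply ex_RInt_const]. intros y Hy.
    rewrite Rmin_left, Rmax_right in Hy by lra. symmetry. apply Hzero. lra. }
  assert (X2 : ex_RInt phi c1 c2).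
  { apply (ex_RInt_ext_R h); [|now apply cont_ex_RInt]. intros y Hy.
    rewrite Rmin_left, Rmax_right in Hy by lra. symmetry. now apply Hmid. }
  assert (X3 : ex_RInt phi c2 1).
  { apply (ex_RInt_ext_R (fun _ => 0)); [|apply ex_RInt_const]. intros y Hy.
    rewrite Rmin_left, Rmax_right in Hy by lra. symmetry. apply Hzero. lra. }
  assert (X12 := ex_RInt_Chasles _ _ _ _ X1 X2).
  fold phi. rewrite Defs_RInt_eq_integral by (eapply ex_RInt_Chasles; eauto).
  rewrite <- (integral_Chasles phi 0 c2 1), <- (integral_Chasles phi 0 c1 c2) by auto.
  rewrite (integral_ext phi (fun _ => 0) 0 c1), (integral_ext phi (fun _ => 0) c2 1),
    (integral_ext phi h c1 c2), !integral_const; [ring| |  |];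
    intros y Hy; rewrite Rmin_left, Rmax_right in Hy by lra; auto; apply Hzero; lra.
Qed.

Lemma Defs_RInt_cont_on (phi h : R -> R) : cont h -> (forall y, 0 <= y <= 1 -> phi y = h y) ->
  Defs.RInt phi 0 1 = integral h 0 1.
Proof.
  intros Hc E.
  assert (Hin : forall y, Rmin 0 1 < y < Rmax 0 1 -> h y = phi y).
  { intros y Hy. rewrite Rmin_left, Rmax_right in Hy by lra. symmetry. apply E. lra. }
  rewrite Defs_RInt_eq_integral by (apply (ex_RInt_ext_R h); auto using cont_ex_RInt).
  symmetry. now apply integral_ext.
Qed.

Lemma prefix_weight_chain_dens lam t k s : 0 <= t <= 1 -> 0 <= s <= 1 ->
  prefix_weight lam t k s = chain_dens lam t k s.
Proof.
  intros Ht. revert s. induction k as [|k IH]; intros s Hs; simpl; [reflexivity|].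
  rewrite clamp_id by exact Hs.
  assert (Hcut : 0 <= cutoff t k <= 1) by (destruct k; simpl; lra).
  assert (Hfirst : forall y, (k = 0)%nat -> y <= cutoff t k -> y <= t) by (intros y ->; auto).
  assert (Hlater : forall y, (k <> 0)%nat -> y < 1 -> y <= cutoff t k).
  { intros y Hk Hy. destruct k; [lia|simpl; lra]. }
  unfold link_ok, step_rel.
  destruct (excluded_middle_informative (descent lam (S k))) as [D|D];
    apply Defs_RInt_window; auto using chain_dens_cont.
  - split; [lra|apply Rmax_l].
  - apply Rmax_lub; lra.
  - intros y Hy. assert (y <= Rmax s (cutoff t k)) by lra. unfold Rmax in *.
    destruct Rle_dec; (split; [apply IH; lra|]); repeat split; intros; try tauto; try lra.
    apply Hfirst; auto; lra.
  - intros y [Hy|Hy] [H1 [H2 [H3 _]]]; [specialize (H3 D); lra|].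
    assert (cutoff t k < y) by (unfold Rmax in Hy; destruct Rle_dec; lra).
    destruct (Nat.eq_dec k 0) as [->|Hk]; [simpl in *; specialize (H1 eq_refl); lra|].
    specialize (Hlater y Hk). lra.
  - split; [lra|apply Rmin_glb; lra].
  - apply Rle_trans with s; [apply Rmin_l|lra].
  - intros y Hy. assert (y < s /\ y < cutoff t k) as [Y1 Y2].
    { unfold Rmin in Hy; destruct Rle_dec; split; lra. }
    split; [apply IH; lra|]. repeat split; intros; try tauto; try lra. apply Hfirst; auto; lra.
  - intros y [Hy|Hy] [H1 [H2 [_ H4]]]; [lra|]. specialize (H4 D).
    assert (cutoff t k < y) by (unfold Rmin in Hy; destruct Rle_dec; lra).
    destruct (Nat.eq_dec k 0) as [->|Hk]; [simpl in *; specialize (H1 eq_refl); lra|].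
    specialize (Hlater y Hk). lra.
Qed.

(** * Repeated integration and moments *)

Definition primitive (h : R -> R) (s : R) : R := integral h 0 (clamp s).

Lemma primitive_cont h : cont h -> cont (primitive h).
Proof.
  intros Hc. apply cont_integral_bounds; auto using nonexpansive_const, nonexpansive_clamp.
Qed.

Lemma iter_primitive_cont m h : cont h -> cont (Nat.iter m primitive h).
Proof. intros Hc. induction m; simpl; auto using primitive_cont. Qed.

Definition cauchy_kernel (j : nat) (h : R -> R) (s : R) : R :=
  integral (fun z => h z * (s - z) ^ j) 0 s.

Lemma cauchy_kernel_0_derive h s : cont h -> is_derive (cauchy_kernel 0 h) s (h s).
Proof.
  intros Hc. unfold cauchy_kernel.
  replace (h s) with (h s * (s - s) ^ 0) by ring. simpl.
  apply (is_derive_integral (fun z => h z * 1)). solve_cont.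
Qed.

Lemma cauchy_kernel_S j h s : cont h ->
  cauchy_kernel (S j) h s = s * cauchy_kernel j h s - cauchy_kernel j (fun z => z * h z) s.
Proof.
  intros Hc. unfold cauchy_kernel.
  assert (C1 : cont (fun z => h z * (s - z) ^ j)) by solve_cont.
  assert (C2 : cont (fun z => z * h z * (s - z) ^ j)) by solve_cont.
  rewrite <- integral_scal, <- integral_minus by (apply cont_ex_RInt; solve_cont).
  apply integral_ext. intros z _. simpl. ring.
Qed.

Lemma is_derive_mult_R (f g : R -> R) x df dg : is_derive f x df -> is_derive g x dg ->
  is_derive (fun y => f y * g y) x (df * g x + f x * dg).
Proof. intros Hf Hg. apply is_derive_Reals, derivable_pt_lim_mult; now apply is_derive_Reals. Qed.

Lemma is_derive_minus_R (f g : R -> R) x df dg : is_derive f x df -> is_derive g x dg ->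
  is_derive (fun y => f y - g y) x (df - dg).
Proof. intros Hf Hg. apply is_derive_Reals, derivable_pt_lim_minus; now apply is_derive_Reals. Qed.

Lemma cauchy_kernel_derive j : forall h s, cont h ->
  is_derive (cauchy_kernel (S j) h) s (INR (S j) * cauchy_kernel j h s).
Proof.
  induction j as [|j IH]; intros h s Hc;
    (assert (Hc' : cont (fun z => z * h z)) by solve_cont).
  - apply (is_derive_ext (fun s => s * cauchy_kernel 0 h s - cauchy_kernel 0 (fun z => z * h z) s));
      [intros y; symmetry; now apply cauchy_kernel_S|].
    replace (INR 1 * cauchy_kernel 0 h s) with (1 * cauchy_kernel 0 h s + s * h s - s * h s)
      by (simpl; ring).
    apply is_derive_minus_R; [apply is_derive_mult_R|].
    + apply is_derive_Reals, derivable_pt_lim_id.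
    + now apply cauchy_kernel_0_derive.
    + exact (cauchy_kernel_0_derive (fun z => z * h z) s Hc').
  - apply (is_derive_ext (fun s => s * cauchy_kernel (S j) h s
                                  - cauchy_kernel (S j) (fun z => z * h z) s));
      [intros y; symmetry; now apply cauchy_kernel_S|].
    replace (INR (S (S j)) * cauchy_kernel (S j) h s) with
      (1 * cauchy_kernel (S j) h s + s * (INR (S j) * cauchy_kernel j h s)
       - INR (S j) * cauchy_kernel j (fun z => z * h z) s)
      by (rewrite (cauchy_kernel_S j h s Hc), !S_INR; ring).
    apply is_derive_minus_R; [apply is_derive_mult_R|]; auto.
    apply is_derive_Reals, derivable_pt_lim_id.
Qed.

Lemma cauchy_kernel_cont j h : cont h -> cont (cauchy_kernel j h).
Proof.
  intros Hc. apply cont_of_derive. intros x.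
  destruct j; eexists; [now apply cauchy_kernel_0_derive|now apply cauchy_kernel_derive].
Qed.

Lemma iter_primitive_cauchy j h s : cont h -> 0 <= s <= 1 ->
  Nat.iter (S j) primitive h s = cauchy_kernel j h s / INR (Factorial.fact j).
Proof.
  intros Hc. revert s. induction j as [|j IH]; intros s Hs.
  - simpl. unfold primitive, cauchy_kernel. rewrite clamp_id by exact Hs. simpl.
    rewrite Rdiv_1_r. apply integral_ext. intros. ring.
  - change (primitive (Nat.iter (S j) primitive h) s =
            cauchy_kernel (S j) h s / INR (Factorial.fact (S j))).
    unfold primitive. rewrite clamp_id by exact Hs.
    rewrite (integral_ext _ (fun z => / INR (Factorial.fact j) * cauchy_kernel j h z)).
    2: { intros z Hz. rewrite Rmin_left, Rmax_right in Hz by lra. rewrite IH by lra.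
         unfold Rdiv. ring. }
    rewrite integral_scal by now apply cont_ex_RInt, cauchy_kernel_cont.
    assert (Hj : INR (S j) <> 0) by (apply not_0_INR; lia).
    assert (E : integral (cauchy_kernel j h) 0 s = cauchy_kernel (S j) h s / INR (S j)).
    { apply is_RInt_unique.
      replace (cauchy_kernel (S j) h s / INR (S j)) with
        (minus (/ INR (S j) * cauchy_kernel (S j) h s) (/ INR (S j) * cauchy_kernel (S j) h 0))
        by (unfold cauchy_kernel; rewrite integral_point; unfold minus, plus, opp; simpl;
            field; exact Hj).
      apply (is_RInt_derive (fun x => / INR (S j) * cauchy_kernel (S j) h x)).
      - intros x _.
        replace (cauchy_kernel j h x) with (/ INR (S j) * (INR (S j) * cauchy_kernel j h x))
          by (field; exact Hj).
        now apply is_derive_scal, cauchy_kernel_derive.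
      - intros x _. now apply cauchy_kernel_cont. }
    rewrite E, fact_simpl, mult_INR. field. split; [apply INR_fact_neq_0|exact Hj].
Qed.

Definition tail_integral (m : nat) (h : R -> R) (s : R) : R :=
  integral (Nat.iter m primitive h) s 1.

Definition moment (h : R -> R) (j : nat) : R := integral (fun z => h z * (1 - z) ^ j) 0 1.

Lemma tail_integral_kernel m h s : cont h -> 0 <= s <= 1 ->
  INR (Factorial.fact m) * tail_integral m h s = moment h m - cauchy_kernel m h s.
Proof.
  intros Hc Hs. unfold tail_integral.
  assert (Hiter : forall u, 0 <= u <= 1 ->
    integral (Nat.iter m primitive h) 0 u = cauchy_kernel m h u / INR (Factorial.fact m)).
  { intros u Hu. rewrite <- iter_primitive_cauchy by auto. simpl. unfold primitive.
    now rewrite clamp_id. }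
  rewrite integral_from0, !Hiter by (auto using iter_primitive_cont; lra).
  unfold moment. change (integral (fun z => h z * (1 - z) ^ m) 0 1) with (cauchy_kernel m h 1).
  field. apply INR_fact_neq_0.
Qed.

Lemma pow_le_1 s m : 0 <= s <= 1 -> s ^ m <= 1.
Proof. intros Hs. rewrite <- (pow1 m). now apply pow_incr. Qed.

Lemma pow_diff_le A B s p : 0 <= B -> B <= s * A -> A - B = 1 - s -> 0 <= s <= 1 -> 0 <= A ->
  A ^ S p - B ^ S p <= (1 - s ^ S p) * A ^ p.
Proof.
  intros HB HBA HAB Hs HA. induction p as [|p IH]; [simpl; lra|].
  assert (Hp : B ^ S p <= s ^ S p * A ^ S p) by (rewrite <- Rpow_mult_distr; apply pow_incr; lra).
  replace (A ^ S (S p) - B ^ S (S p)) with (A * (A ^ S p - B ^ S p) + B ^ S p * (A - B))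
    by (simpl; ring).
  apply Rle_trans with (A * ((1 - s ^ S p) * A ^ p) + s ^ S p * A ^ S p * (1 - s)).
  - apply Rplus_le_compat; [now apply Rmult_le_compat_l|].
    rewrite HAB. apply Rmult_le_compat_r; lra.
  - simpl. lra.
Qed.

Lemma cauchy_kernel_le_moment h m s :
  cont h -> (forall z, 0 <= z <= 1 -> 0 <= h z) -> 0 <= s <= 1 ->
  cauchy_kernel m h s <= s ^ m * moment h m.
Proof.
  intros Hc Hh Hs. unfold cauchy_kernel, moment.
  assert (Hnn : forall a b, 0 <= a -> a <= b -> b <= 1 ->
    0 <= integral (fun z => h z * (1 - z) ^ m) a b).
  { intros a b Ha Hab Hb. apply integral_ge0; [lra|apply cont_ex_RInt; solve_cont|].
    intros z Hz. apply Rmult_le_pos; [apply Hh; lra|apply pow_le; lra]. }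
  rewrite <- (integral_Chasles _ 0 s 1) by (apply cont_ex_RInt; solve_cont).
  pose proof (Hnn s 1 ltac:(lra) ltac:(lra) ltac:(lra)).
  assert (0 <= s ^ m) by (apply pow_le; lra).
  apply Rle_trans with (s ^ m * integral (fun z => h z * (1 - z) ^ m) 0 s); [|nra].
  rewrite <- integral_scal by (apply cont_ex_RInt; solve_cont).
  apply integral_le; [lra|apply cont_ex_RInt; solve_cont..|].
  intros z Hz. rewrite <- Rmult_assoc, (Rmult_comm (s ^ m)), Rmult_assoc, <- Rpow_mult_distr.
  apply Rmult_le_compat_l; [apply Hh; lra|]. apply pow_incr. nra.
Qed.

Lemma moment_sub_cauchy_kernel_le h m s :
  cont h -> (forall z, 0 <= z <= 1 -> 0 <= h z) -> (1 <= m)%nat -> 0 <= s <= 1 ->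
  moment h m - cauchy_kernel m h s <= (1 - s ^ m) * moment h (m - 1).
Proof.
  intros Hc Hh Hm Hs. destruct m as [|p]; [lia|]. rewrite Nat.sub_succ, Nat.sub_0_r.
  unfold moment, cauchy_kernel.
  set (F := fun z => h z * (1 - z) ^ S p). set (G := fun z => h z * (1 - z) ^ p).
  assert (HF : cont F) by (unfold F; solve_cont). assert (HG : cont G) by (unfold G; solve_cont).
  assert (Hnear : integral F 0 s - integral (fun z => h z * (s - z) ^ S p) 0 s
                  <= (1 - s ^ S p) * integral G 0 s).
  { rewrite <- integral_minus, <- integral_scal by (apply cont_ex_RInt; solve_cont).
    apply integral_le; [lra|apply cont_ex_RInt; solve_cont..|]. intros z Hz.
    assert (0 <= h z) by (apply Hh; lra). unfold F, G.
    pose proof (pow_diff_le (1 - z) (s - z) s p ltac:(lra) ltac:(nra) ltac:(lra) Hs ltac:(lra)).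
    nra. }
  assert (Hfar : integral F s 1 <= (1 - s ^ S p) * integral G s 1).
  { rewrite <- integral_scal by now apply cont_ex_RInt.
    apply integral_le; [lra|apply cont_ex_RInt; solve_cont..|]. intros z Hz.
    assert (0 <= h z) by (apply Hh; lra). unfold F, G.
    assert (s ^ S p <= s) by (simpl; pose proof (pow_le_1 s p Hs); nra).
    assert (0 <= h z * (1 - z) ^ p) by (apply Rmult_le_pos; [lra|apply pow_le; lra]).
    replace (h z * (1 - z) ^ S p) with ((1 - z) * (h z * (1 - z) ^ p)) by (simpl; ring).
    nra. }
  rewrite <- (integral_Chasles F 0 s 1), <- (integral_Chasles G 0 s 1) by now apply cont_ex_RInt.
  rewrite Rmult_plus_distr_l. lra.
Qed.

Lemma tail_integral_bounds h m s :
  cont h -> (forall z, 0 <= z <= 1 -> 0 <= h z) -> (1 <= m)%nat -> 0 <= s <= 1 ->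
  (1 - s ^ m) * moment h m <= INR (Factorial.fact m) * tail_integral m h s <=
  (1 - s ^ m) * moment h (m - 1).
Proof.
  intros Hc Hh Hm Hs. rewrite tail_integral_kernel by auto.
  pose proof (cauchy_kernel_le_moment h m s Hc Hh Hs).
  pose proof (moment_sub_cauchy_kernel_le h m s Hc Hh Hm Hs). lra.
Qed.

Lemma integral_pow_one_minus j : integral (fun z => (1 - z) ^ j) 0 1 = / INR (S j).
Proof.
  assert (Hj : INR (S j) <> 0) by (apply not_0_INR; lia).
  apply is_RInt_unique.
  replace (/ INR (S j)) with
    (minus ((fun z => - (1 - z) ^ S j / INR (S j)) 1) ((fun z => - (1 - z) ^ S j / INR (S j)) 0))
    by (unfold minus, plus, opp; cbn -[INR pow];
        rewrite Rminus_0_r, Rminus_diag, pow1, pow_i by lia; field; exact Hj).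
  apply (is_RInt_derive (fun z => - (1 - z) ^ S j / INR (S j))).
  - intros z _. auto_derive; [exact I|].
    change (match j with 0%nat => 1 | S _ => INR j + 1 end) with (INR (S j)).
    replace (1 + - z) with (1 - z) by ring. field. exact Hj.
  - intros z _. apply cont_pow, cont_minus; [apply cont_const|apply cont_id].
Qed.

Lemma moment_ge0 h j : cont h -> (forall z, 0 <= z <= 1 -> 0 <= h z) -> 0 <= moment h j.
Proof.
  intros Hc Hh. apply integral_ge0; [lra|apply cont_ex_RInt; solve_cont|].
  intros z Hz. apply Rmult_le_pos; [apply Hh; lra|apply pow_le; lra].
Qed.

(* Chebyshev's inequality: [g] is nonincreasing, while [(1 - z) ^ (m - 1) * ((m + 1) z - 1)] has
   integral zero and changes sign once, at [1 / (m + 1)]. *)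
Lemma moment_chebyshev g m : cont g ->
  (forall z1 z2, 0 <= z1 -> z1 <= z2 -> z2 <= 1 -> g z2 <= g z1) -> (1 <= m)%nat ->
  INR m * moment g (m - 1) <= (INR m + 1) * moment g m.
Proof.
  intros Hc Hmono Hm. destruct m as [|p]; [lia|]. rewrite Nat.sub_succ, Nat.sub_0_r.
  set (m := S p) in *. assert (Hm1 : 1 <= INR m) by (apply (le_INR 1); lia).
  set (z0 := / (INR m + 1)).
  assert (Hz0 : 0 < z0 < 1).
  { unfold z0. split; [apply Rinv_0_lt_compat; lra|].
    rewrite <- Rinv_1. apply Rinv_lt_contravar; lra. }
  set (phi := fun z => (1 - z) ^ p * ((INR m + 1) * z - 1)).
  assert (Hphi : cont phi) by (unfold phi; solve_cont).
  assert (E : INR m * moment g p - (INR m + 1) * moment g m = integral (fun z => g z * phi z) 0 1).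
  { unfold moment. rewrite <- !integral_scal, <- integral_minus by (apply cont_ex_RInt; solve_cont).
    apply integral_ext. intros z _. unfold phi, m. simpl. ring. }
  assert (Hphi0 : integral phi 0 1 = 0).
  { unfold phi. rewrite (integral_ext _ (fun z => INR m * (1 - z) ^ p - (INR m + 1) * (1 - z) ^ m))
      by (intros; unfold m; simpl; ring).
    rewrite integral_minus, !integral_scal, !integral_pow_one_minus
      by (apply cont_ex_RInt; solve_cont).
    unfold m. rewrite !S_INR. pose proof (pos_INR p). field. lra. }
  assert (I : integral (fun z => g z * phi z) 0 1 <= integral (fun z => g z0 * phi z) 0 1).
  { apply integral_le; [lra|apply cont_ex_RInt; solve_cont..|]. intros z Hz.
    assert (0 <= (1 - z) ^ p) by (apply pow_le; lra).
    assert (Hz0' : (INR m + 1) * z0 = 1) by (unfold z0; field; lra).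
    unfold phi. destruct (Rle_dec z z0).
    - assert (g z0 <= g z) by (apply Hmono; lra). assert ((INR m + 1) * z <= 1) by nra.
      assert (0 <= (g z - g z0) * (1 - z) ^ p) by (apply Rmult_le_pos; lra). nra.
    - assert (g z <= g z0) by (apply Hmono; lra). assert (1 <= (INR m + 1) * z) by nra.
      assert (0 <= (g z0 - g z) * (1 - z) ^ p) by (apply Rmult_le_pos; lra). nra. }
  rewrite integral_scal, Hphi0 in I by now apply cont_ex_RInt. lra.
Qed.

(** * Pinching *)

Definition pinched (P Q : R -> R) (e : R) : Prop :=
  exists c C, C - c <= e /\ forall s, 0 <= s <= 1 -> c * Q s <= P s <= C * Q s.

Section TailIntegrals.

Variables (f g : R -> R) (m : nat).
Hypotheses (Hf : cont f) (Hg : cont g) (Hm : (1 <= m)%nat).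
Hypothesis Hfg : forall z, 0 <= z <= 1 -> 0 <= f z <= g z.
Hypothesis Hmono : forall z1 z2, 0 <= z1 -> z1 <= z2 -> z2 <= 1 -> g z2 <= g z1.

Let Hf0 : forall z, 0 <= z <= 1 -> 0 <= f z.
Proof. intros z Hz. apply Hfg, Hz. Qed.

Let Hg0 : forall z, 0 <= z <= 1 -> 0 <= g z.
Proof. intros z Hz. pose proof (Hfg z Hz). lra. Qed.

Lemma moment_ratio_gap : 0 < moment g (m - 1) ->
  0 < moment g m /\ moment f (m - 1) / moment g m - moment f m / moment g (m - 1) <= 2 / INR m.
Proof.
  intros HGU. destruct m as [|p]; [lia|]. rewrite Nat.sub_succ, Nat.sub_0_r in *.
  assert (Hm1 : 1 <= INR (S p)) by (apply (le_INR 1); lia).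
  pose proof (moment_chebyshev g (S p) Hg Hmono Hm) as Hcheb.
  rewrite Nat.sub_succ, Nat.sub_0_r in Hcheb.
  set (FL := moment f (S p)) in *. set (FU := moment f p) in *.
  set (GL := moment g (S p)) in *. set (GU := moment g p) in *.
  assert (0 <= FL) by now apply moment_ge0.
  assert (HGL : 0 < GL) by nra.
  split; [exact HGL|].
  assert (D1 : FL <= GL).
  { apply integral_le; [lra|apply cont_ex_RInt; solve_cont..|]. intros z Hz.
    apply Rmult_le_compat_r; [apply pow_le; lra|apply Hfg; lra]. }
  assert (D2 : GL <= GU).
  { apply integral_le; [lra|apply cont_ex_RInt; solve_cont..|]. intros z Hz.
    assert (0 <= g z * (1 - z) ^ p) by (apply Rmult_le_pos; [apply Hg0; lra|apply pow_le; lra]).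
    simpl. nra. }
  assert (D3 : FU - FL <= GU - GL).
  { unfold FU, FL, GU, GL, moment. rewrite <- !integral_minus by (apply cont_ex_RInt; solve_cont).
    apply integral_le; [lra|apply cont_ex_RInt; solve_cont..|]. intros z Hz.
    assert (0 <= z * (1 - z) ^ p) by (apply Rmult_le_pos; [lra|apply pow_le; lra]).
    pose proof (Hfg z ltac:(lra)). simpl. nra. }
  assert (Key : FU * GU - FL * GL <= 2 * GU * GL / INR (S p)).
  { apply Rle_trans with (2 * GU * (GU - GL)).
    { assert (FU * GU <= (FL + (GU - GL)) * GU) by (apply Rmult_le_compat_r; lra).
      assert (FL * (GU - GL) <= GU * (GU - GL)) by (apply Rmult_le_compat_r; lra). lra. }
    apply Rmult_le_reg_r with (INR (S p)); [lra|].
    replace (2 * GU * GL / INR (S p) * INR (S p)) with (2 * GU * GL) by (field; lra). nra. }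
  replace (FU / GL - FL / GU) with ((FU * GU - FL * GL) / (GL * GU)) by (field; lra).
  apply Rmult_le_reg_r with (GL * GU); [nra|].
  replace ((FU * GU - FL * GL) / (GL * GU) * (GL * GU)) with (FU * GU - FL * GL) by (field; lra).
  replace (2 / INR (S p) * (GL * GU)) with (2 * GU * GL / INR (S p)) by (field; lra). exact Key.
Qed.

Lemma tail_integral_pinched : pinched (tail_integral m f) (tail_integral m g) (2 / INR m).
Proof.
  assert (Hpos : 0 < 2 / INR m) by (apply Rdiv_lt_0_compat; [lra|apply lt_0_INR; lia]).
  assert (Bf := fun s Hs => tail_integral_bounds f m s Hf Hf0 Hm Hs).
  assert (Bg := fun s Hs => tail_integral_bounds g m s Hg Hg0 Hm Hs).
  assert (Hfact := INR_fact_lt_0 m). set (c := INR (Factorial.fact m)) in *.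
  assert (Hsm : forall s, 0 <= s <= 1 -> 0 <= 1 - s ^ m)
    by (intros s Hs; pose proof (pow_le_1 s m Hs); lra).
  assert (Hfg_m : forall j, moment f j <= moment g j).
  { intros j. apply integral_le; [lra|apply cont_ex_RInt; solve_cont..|]. intros z Hz.
    apply Rmult_le_compat_r; [apply pow_le; lra|apply Hfg; lra]. }
  destruct (Rle_lt_dec (moment g (m - 1)) 0) as [HGU|HGU].
  - (* Then both tail integrals vanish on [0, 1]. *)
    exists 0, 0. split; [lra|]. intros s Hs.
    assert (0 <= moment f (m - 1)) by now apply moment_ge0.
    pose proof (Hfg_m (m - 1)%nat).
    destruct (Bf s Hs) as [Bf1 Bf2]. destruct (Bg s Hs) as [Bg1 Bg2].
    replace (moment f (m - 1)) with 0 in Bf2 by lra.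
    pose proof (Rmult_le_pos _ _ (Hsm s Hs) (moment_ge0 f m Hf Hf0)).
    assert (c * tail_integral m f s = 0) by lra.
    assert (tail_integral m f s = 0) as -> by nra. lra.
  - destruct moment_ratio_gap as [HGL Hgap]; [exact HGU|].
    exists (moment f m / moment g (m - 1)), (moment f (m - 1) / moment g m).
    split; [exact Hgap|]. intros s Hs.
    destruct (Bf s Hs) as [Bf1 Bf2]. destruct (Bg s Hs) as [Bg1 Bg2]. pose proof (Hsm s Hs).
    assert (0 <= moment f m) by now apply moment_ge0.
    assert (0 <= moment f (m - 1)) by now apply moment_ge0.
    split; apply (Rmult_le_reg_l c); auto.
    + unfold Rdiv. apply Rmult_le_reg_l with (moment g (m - 1)); [exact HGU|].
      replace (moment g (m - 1) * (c * (moment f m * / moment g (m - 1) * tail_integral m g s)))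
        with (moment f m * (c * tail_integral m g s)) by (field; lra). nra.
    + unfold Rdiv. apply Rmult_le_reg_l with (moment g m); [exact HGL|].
      replace (moment g m * (c * (moment f (m - 1) * / moment g m * tail_integral m g s)))
        with (moment f (m - 1) * (c * tail_integral m g s)) by (field; lra). nra.
Qed.

End TailIntegrals.

Lemma pinched_ext P Q P' Q' e : pinched P Q e ->
  (forall s, 0 <= s <= 1 -> P' s = P s /\ Q' s = Q s) -> pinched P' Q' e.
Proof.
  intros [c [C [Hce H]]] E. exists c, C. split; [exact Hce|].
  intros s Hs. destruct (E s Hs) as [-> ->]. now apply H.
Qed.

Lemma pinched_comp P Q sg e : pinched P Q e -> (forall s, 0 <= s <= 1 -> 0 <= sg s <= 1) ->
  pinched (fun s => P (sg s)) (fun s => Q (sg s)) e.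
Proof.
  intros [c [C [Hce H]]] Hsg. exists c, C. split; [exact Hce|]. intros s Hs. now apply H, Hsg.
Qed.

Lemma pinched_integral P Q a b e : cont P -> cont Q -> pinched P Q e ->
  (forall s, 0 <= s <= 1 -> 0 <= a s <= b s /\ b s <= 1) ->
  pinched (fun s => integral P (a s) (b s)) (fun s => integral Q (a s) (b s)) e.
Proof.
  intros HP HQ [c [C [Hce H]]] Hab. exists c, C. split; [exact Hce|]. intros s Hs.
  specialize (Hab s Hs).
  rewrite <- !integral_scal by now apply cont_ex_RInt.
  split; apply integral_le; try lra; try (apply cont_ex_RInt; solve_cont);
    intros z Hz; apply H; lra.
Qed.

Lemma chain_dens_pinched lam t b k e : (1 <= b <= k)%nat ->
  pinched (chain_dens lam t b) (chain_dens lam 1 b) e ->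
  pinched (chain_dens lam t k) (chain_dens lam 1 k) e.
Proof.
  intros [Hb Hbk] Hpin. induction Hbk as [|k Hbk IH]; [exact Hpin|].
  assert (Hcut : cutoff t k = 1) by (destruct k; [lia|reflexivity]).
  assert (Hrange := clamp_range).
  destruct (excluded_middle_informative (descent lam (S k))) as [D|D];
    [apply pinched_ext with (fun s => integral (chain_dens lam t k) (clamp s) 1)
                            (fun s => integral (chain_dens lam 1 k) (clamp s) 1)
    |apply pinched_ext with (fun s => integral (chain_dens lam t k) 0 (clamp s))
                            (fun s => integral (chain_dens lam 1 k) 0 (clamp s))];
    try (apply pinched_integral; auto using chain_dens_cont;
         intros s _; specialize (Hrange s); lra);
    intros s _; rewrite !chain_dens_S by (exact Hcut || apply cutoff_1);
    destruct (excluded_middle_informative _); tauto.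
Qed.

Lemma integral_gt0_of_pos_point h x : cont h -> (forall z, 0 <= z <= 1 -> 0 <= h z) ->
  0 <= x <= 1 -> 0 < h x -> 0 < integral h 0 1.
Proof.
  intros Hc Hh Hx Hpos.
  destruct (proj2 (continuity_pt_filterlim h x) (Hc x) (h x / 2)) as [d [Hd Hnear]]; [lra|].
  simpl in Hnear. unfold R_dist, D_x, no_cond in Hnear.
  set (c := Rmax 0 (x - d / 2)). set (e := Rmin 1 (x + d / 2)).
  assert (Hce : 0 <= c < e /\ e <= 1) by (unfold c, e, Rmax, Rmin; repeat destruct Rle_dec; lra).
  assert (Hin : forall y, c < y < e -> 0 < h y).
  { intros y Hy. destruct (Req_dec y x) as [->|Hne]; [exact Hpos|].
    assert (Rabs (y - x) < d).
    { unfold c, e, Rmax, Rmin in Hy.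
      repeat destruct Rle_dec; unfold Rabs; destruct Rcase_abs; lra. }
    assert (Hclose : Rabs (h y - h x) < h x / 2) by (apply Hnear; repeat split; auto).
    apply Rabs_def2 in Hclose. lra. }
  assert (0 < integral h c e) by (apply RInt_gt_0; [lra|exact Hin|intros; apply Hc]).
  assert (0 <= integral h 0 c)
    by (apply integral_ge0; [lra|now apply cont_ex_RInt|intros; apply Hh; lra]).
  assert (0 <= integral h e 1)
    by (apply integral_ge0; [lra|now apply cont_ex_RInt|intros; apply Hh; lra]).
  rewrite <- (integral_Chasles h 0 e 1), <- (integral_Chasles h 0 c e) by now apply cont_ex_RInt.
  lra.
Qed.

Lemma ratio_between p q c C : 0 < q -> c * q <= p <= C * q -> c <= p / q <= C.
Proof.
  intros Hq [H1 H2]. split.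
  - apply (Rmult_le_reg_r q); [exact Hq|]. unfold Rdiv. rewrite Rmult_assoc, Rinv_l; lra.
  - apply (Rmult_le_reg_r q); [exact Hq|]. unfold Rdiv. rewrite Rmult_assoc, Rinv_l; lra.
Qed.

(* Both the pointwise ratio and the ratio of the integrals lie between the pinching constants. *)
Lemma pinched_ratio_dist P Q e x : cont P -> cont Q -> pinched P Q e ->
  (forall s, 0 <= s <= 1 -> 0 <= Q s) -> 0 <= x <= 1 -> 0 < Q x ->
  Rabs (P x / Q x - integral P 0 1 / integral Q 0 1) <= e.
Proof.
  intros HP HQ [c [C [Hce H]]] HQ0 Hx Hpos.
  assert (HIQ : 0 < integral Q 0 1) by now apply (integral_gt0_of_pos_point Q x).
  assert (Hx' := ratio_between _ _ c C Hpos (H x Hx)).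
  assert (HI : c * integral Q 0 1 <= integral P 0 1 <= C * integral Q 0 1).
  { rewrite <- !integral_scal by now apply cont_ex_RInt.
    split; apply integral_le; try lra; try (apply cont_ex_RInt; solve_cont); intros; apply H; lra. }
  pose proof (ratio_between _ _ c C HIQ HI).
  apply Rabs_le. lra.
Qed.

(** * Runs *)

Definition reflect (h : R -> R) (z : R) : R := h (1 - z).

Lemma reflect_cont h : cont h -> cont (reflect h).
Proof. intros Hc. apply (cont_comp (fun z => 1 - z)); [solve_cont|exact Hc]. Qed.

Lemma integral_reflect F a b : cont F -> integral (reflect F) a b = integral F (1 - b) (1 - a).
Proof.
  intros Hc.
  assert (E := RInt_comp_lin F (-1) 1 a b).
  replace (-1 * a + 1) with (1 - a) in E by ring. replace (-1 * b + 1) with (1 - b) in E by ring.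
  assert (E' : integral (fun y => -1 * reflect F y) a b = integral F (1 - a) (1 - b)).
  { unfold integral. rewrite <- E by now apply cont_ex_RInt. apply RInt_ext. intros y _.
    unfold reflect. replace (-1 * y + 1) with (1 - y) by ring. reflexivity. }
  rewrite integral_scal in E' by now apply cont_ex_RInt, reflect_cont.
  assert (C : integral F (1 - b) (1 - a) + integral F (1 - a) (1 - b) = 0).
  { rewrite integral_Chasles by now apply cont_ex_RInt. apply integral_point. }
  lra.
Qed.

Lemma chain_dens_ascending lam t k j : (1 <= k)%nat ->
  (forall i, (k < i <= k + j)%nat -> ~ descent lam i) ->
  forall s, chain_dens lam t (k + j) s = Nat.iter j primitive (chain_dens lam t k) s.
Proof.
  intros Hk Hasc. induction j as [|j IH]; intros s; [now rewrite Nat.add_0_r|].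
  rewrite Nat.add_succ_r, chain_dens_S by (destruct (k + j)%nat eqn:E; [lia|reflexivity]).
  destruct (excluded_middle_informative _) as [D|_].
  { exfalso. apply (Hasc (S (k + j))); [lia|exact D]. }
  simpl. unfold primitive. f_equal. apply functional_extensionality. intros z.
  apply IH. intros i Hi. apply Hasc. lia.
Qed.

Lemma chain_dens_descending lam t k j : (1 <= k)%nat ->
  (forall i, (k < i <= k + j)%nat -> descent lam i) ->
  forall s, 0 <= s <= 1 ->
  chain_dens lam t (k + j) s = Nat.iter j primitive (reflect (chain_dens lam t k)) (1 - s).
Proof.
  intros Hk Hdesc. induction j as [|j IH]; intros s Hs.
  - rewrite Nat.add_0_r. simpl. unfold reflect. f_equal. ring.
  - rewrite Nat.add_succ_r, chain_dens_S by (destruct (k + j)%nat eqn:E; [lia|reflexivity]).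
    destruct (excluded_middle_informative _) as [_|D]; [|exfalso; apply D, Hdesc; lia].
    rewrite clamp_id by exact Hs.
    rewrite (integral_ext _ (reflect (Nat.iter j primitive (reflect (chain_dens lam t k))))).
    2: { intros z Hz. rewrite Rmin_left, Rmax_right in Hz by lra. apply IH; [|lra].
         intros i Hi. apply Hdesc. lia. }
    rewrite integral_reflect by apply iter_primitive_cont, reflect_cont, chain_dens_cont.
    simpl. unfold primitive. rewrite clamp_id by lra. f_equal. ring.
Qed.

Lemma chain_dens_end_ascending lam t k m : (1 <= k)%nat ->
  (forall i, (k < i <= k + m)%nat -> ~ descent lam i) -> descent lam (S (k + m)) ->
  forall s, 0 <= s <= 1 -> chain_dens lam t (S (k + m)) s = tail_integral m (chain_dens lam t k) s.
Proof.
  intros Hk Hasc Hd s Hs.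
  rewrite chain_dens_S by (destruct (k + m)%nat eqn:E; [lia|reflexivity]).
  destruct (excluded_middle_informative _) as [_|]; [|contradiction].
  rewrite clamp_id by exact Hs. unfold tail_integral. f_equal.
  apply functional_extensionality. now apply chain_dens_ascending.
Qed.

Lemma chain_dens_end_descending lam t k m : (1 <= k)%nat ->
  (forall i, (k < i <= k + m)%nat -> descent lam i) -> ~ descent lam (S (k + m)) ->
  forall s, 0 <= s <= 1 ->
  chain_dens lam t (S (k + m)) s = tail_integral m (reflect (chain_dens lam t k)) (1 - s).
Proof.
  intros Hk Hdesc Hd s Hs.
  rewrite chain_dens_S by (destruct (k + m)%nat eqn:E; [lia|reflexivity]).
  destruct (excluded_middle_informative _) as [|_]; [contradiction|].
  rewrite clamp_id by exact Hs.
  rewrite (integral_ext _ (reflect (Nat.iter m primitive (reflect (chain_dens lam t k))))).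
  2: { intros z Hz. rewrite Rmin_left, Rmax_right in Hz by lra.
       apply chain_dens_descending; auto; lra. }
  rewrite integral_reflect by apply iter_primitive_cont, reflect_cont, chain_dens_cont.
  unfold tail_integral. f_equal. ring.
Qed.

Lemma chain_dens_1_noninc lam k z1 z2 : descent lam (S k) -> 0 <= z1 -> z1 <= z2 -> z2 <= 1 ->
  chain_dens lam 1 (S k) z2 <= chain_dens lam 1 (S k) z1.
Proof.
  intros Hd H1 H2 H3. rewrite !chain_dens_S by apply cutoff_1.
  destruct (excluded_middle_informative _) as [_|]; [|contradiction].
  rewrite !clamp_id by lra.
  rewrite <- (integral_Chasles _ z1 z2 1) by apply chain_dens_ex_RInt.
  assert (0 <= integral (chain_dens lam 1 k) z1 z2); [|lra].
  apply integral_ge0; auto using chain_dens_ex_RInt. intros. apply chain_dens_ge0. lra.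
Qed.

Lemma chain_dens_1_nondec lam k z1 z2 : ~ descent lam (S k) -> 0 <= z1 -> z1 <= z2 -> z2 <= 1 ->
  chain_dens lam 1 (S k) z1 <= chain_dens lam 1 (S k) z2.
Proof.
  intros Hd H1 H2 H3. rewrite !chain_dens_S by apply cutoff_1.
  destruct (excluded_middle_informative _) as [|_]; [contradiction|].
  rewrite !clamp_id by lra.
  rewrite <- (integral_Chasles _ 0 z1 z2) by apply chain_dens_ex_RInt.
  assert (0 <= integral (chain_dens lam 1 k) z1 z2); [|lra].
  apply integral_ge0; auto using chain_dens_ex_RInt. intros. apply chain_dens_ge0. lra.
Qed.

Lemma interior_run_shape lam a b : is_interior_run lam a b ->
  (2 <= a)%nat /\ (a < b)%nat /\ (b < csize lam)%nat /\
  (((forall i, (a <= i < b)%nat -> ~ descent lam i) /\ descent lam (a - 1) /\ descent lam b) \/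
   ((forall i, (a <= i < b)%nat -> descent lam i) /\ ~ descent lam (a - 1) /\ ~ descent lam b)).
Proof.
  intros [[[Hab [Hbn Hu]] Hmax] [Ha1 Hbn1]].
  assert (Hext : forall a' b', (a' <= a)%nat -> (b <= b')%nat -> (a', b') <> (a, b) ->
                 ~ uniform_block lam a' b').
  { intros a' b' H1 H2 Hne Hu'. destruct (Hmax a' b' H1 H2 Hu') as [-> ->]. now apply Hne. }
  assert (Hleft : forall P : nat -> Prop, (forall i, (a <= i < b)%nat -> P i) ->
     P (a - 1)%nat -> forall i, (a - 1 <= i < b)%nat -> P i).
  { intros P HP Ha i Hi. destruct (Nat.eq_dec i (a - 1)) as [->|]; [exact Ha|]. apply HP. lia. }
  assert (Hright : forall P : nat -> Prop, (forall i, (a <= i < b)%nat -> P i) ->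
     P b -> forall i, (a <= i < b + 1)%nat -> P i).
  { intros P HP Hb i Hi. destruct (Nat.eq_dec i b) as [->|]; [exact Hb|]. apply HP. lia. }
  repeat split; try lia.
  destruct Hu as [Up|Dn]; [left|right]; (split; [assumption|split]).
  - apply NNPP. intros D. apply (Hext (a - 1)%nat b); try lia; [intros [=]; lia|].
    repeat split; try lia. left. now apply Hleft.
  - apply NNPP. intros D. apply (Hext a (b + 1)%nat); try lia; [intros [=]; lia|].
    repeat split; try lia. left. now apply Hright.
  - intros D. apply (Hext (a - 1)%nat b); try lia; [intros [=]; lia|].
    repeat split; try lia. right. now apply Hleft.
  - intros D. apply (Hext a (b + 1)%nat); try lia; [intros [=]; lia|].
    repeat split; try lia. right. now apply Hright.
Qed.

Lemma interior_run_pinched lam t a b : is_interior_run lam a b -> 0 <= t <= 1 ->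
  pinched (chain_dens lam t b) (chain_dens lam 1 b) (2 / INR (b - a)).
Proof.
  intros Hrun Ht. destruct (interior_run_shape lam a b Hrun) as [Ha [Hab [_ Hcases]]].
  set (k := (a - 2)%nat). set (m := (b - a)%nat).
  assert (Hb : b = S (S k + m)) by (unfold k, m; lia).
  assert (Hm : (1 <= m)%nat) by (unfold m; lia).
  assert (Hrange : forall P : nat -> Prop, (forall i, (a <= i < b)%nat -> P i) ->
                   forall i, (S k < i <= S k + m)%nat -> P i).
  { intros P HP i Hi. apply HP. unfold k, m in Hi. lia. }
  assert (Hfg : forall z, 0 <= z <= 1 -> 0 <= chain_dens lam t (S k) z <= chain_dens lam 1 (S k) z).
  { intros z Hz. split; [apply chain_dens_ge0|apply chain_dens_le]; lra. }
  replace (a - 1)%nat with (S k) in Hcases by (unfold k; lia).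
  rewrite Hb.
  destruct Hcases as [[Hasc [Dk Db]]|[Hdesc [Dk Db]]]; rewrite Hb in Db.
  - apply pinched_ext with (tail_integral m (chain_dens lam t (S k)))
                           (tail_integral m (chain_dens lam 1 (S k))).
    + apply tail_integral_pinched; auto using chain_dens_cont.
      intros. now apply chain_dens_1_noninc.
    + intros s Hs.
      split; (apply chain_dens_end_ascending; [lia|now apply Hrange|exact Db|exact Hs]).
  - apply pinched_ext with (fun s => tail_integral m (reflect (chain_dens lam t (S k))) (1 - s))
                           (fun s => tail_integral m (reflect (chain_dens lam 1 (S k))) (1 - s)).
    + apply pinched_comp; [|intros; lra].
      apply tail_integral_pinched; auto using chain_dens_cont, reflect_cont.
      * intros z Hz. apply Hfg. lra.
      * intros z1 z2 H1 H2 H3. apply chain_dens_1_nondec; auto; lra.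
    + intros s Hs.
      split; (apply chain_dens_end_descending; [lia|now apply Hrange|exact Db|exact Hs]).
Qed.

Lemma bounded_max_exists (P : nat -> Prop) N k0 : P k0 -> (forall k, P k -> (k <= N)%nat) ->
  exists k, P k /\ forall k', P k' -> (k' <= k)%nat.
Proof.
  intros Hk0 Hb. generalize (Nat.le_refl (N - k0)). generalize (N - k0)%nat at 2 as d.
  intros d Hd. revert k0 Hd Hk0. induction d as [|d IH]; intros k0 Hd Hk0.
  - exists k0. split; [exact Hk0|]. intros k' Hk'. specialize (Hb k' Hk'). lia.
  - destruct (classic (exists k, P k /\ (k0 < k)%nat)) as [[k [Pk Hk]]|Hn].
    + apply (IH k); [specialize (Hb k Pk); lia|exact Pk].
    + exists k0. split; [exact Hk0|]. intros k' Hk'.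
      destruct (Nat.le_gt_cases k' k0); [assumption|]. exfalso. apply Hn. eauto.
Qed.

Lemma first_run_exists lam : (2 <= csize lam)%nat -> exists b, is_first_run lam 1 b.
Proof.
  intros Hn.
  assert (U2 : uniform_block lam 1 2).
  { split; [lia|split; [lia|]].
    destruct (classic (descent lam 1)) as [D|D]; [right|left]; intros i Hi;
      replace i with 1%nat by lia; exact D. }
  destruct (bounded_max_exists (uniform_block lam 1) (csize lam) 2) as [b [Ub Mb]];
    [exact U2|intros k [_ [Hk _]]; exact Hk|].
  exists b. split; [split; [exact Ub|]|reflexivity]. intros a' b' Ha' Hb' U'.
  assert (a' = 1%nat) by (destruct U' as [? _]; lia). subst a'.
  split; [reflexivity|]. specialize (Mb b' U'). lia.
Qed.

Lemma run_length_ge2 lam a b : is_run lam a b -> (2 <= run_length a b)%nat.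
Proof. intros [[Hab _] _]. unfold run_length. lia. Qed.

(** * The distribution functions *)

Section Model.

Variables (lam : list nat) (n : nat).
Hypotheses (Hn : csize lam = S n) (Hn1 : (1 <= n)%nat).

Lemma slice_dens_chain_dens t y : 0 <= t <= 1 -> 0 <= y <= 1 ->
  slice_dens lam y t = chain_dens lam t n y.
Proof.
  intros Ht Hy. rewrite slice_dens_prefix_weight with (n := n); auto.
  now apply prefix_weight_chain_dens.
Qed.

Lemma dens_XF_chain_dens y : 0 <= y <= 1 -> dens_XF lam y = chain_dens lam 1 n y.
Proof.
  intros Hy. rewrite dens_XF_slice_dens by lia. apply slice_dens_chain_dens; lra.
Qed.

Lemma cdf_XI_given_XF_chain_dens x t : 0 <= x <= 1 -> 0 <= t <= 1 ->
  cdf_XI_given_XF lam x t = chain_dens lam t n x / chain_dens lam 1 n x.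
Proof.
  intros Hx Ht. unfold cdf_XI_given_XF. now rewrite slice_dens_chain_dens, dens_XF_chain_dens.
Qed.

Lemma cdf_XI_chain_dens t : 0 <= t <= 1 ->
  cdf_XI lam t = integral (chain_dens lam t n) 0 1 / integral (chain_dens lam 1 n) 0 1.
Proof.
  intros Ht. unfold cdf_XI. rewrite Hn. simpl iint.
  f_equal; apply Defs_RInt_cont_on; auto using chain_dens_cont; intros y Hy.
  - rewrite <- slice_dens_chain_dens by auto. unfold slice_dens.
    now rewrite Hn, Nat.sub_succ, Nat.sub_0_r.
  - rewrite <- dens_XF_chain_dens by auto. unfold dens_XF.
    now rewrite Hn, Nat.sub_succ, Nat.sub_0_r.
Qed.

End Model.

Lemma two_div_le_bound (A : R) (m : nat) : 2 <= A -> (2 <= m)%nat ->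
  2 / INR m <= 4 * A ^ 2 / (INR (S m) - 2).
Proof.
  intros HA Hm. assert (Hm2 : 2 <= INR m) by (apply (le_INR 2) in Hm; simpl in Hm; lra).
  rewrite S_INR. apply Rle_trans with (16 / (INR m - 1)).
  - apply Rmult_le_reg_r with (INR m * (INR m - 1)); [nra|].
    replace (2 / INR m * (INR m * (INR m - 1))) with (2 * (INR m - 1)) by (field; lra).
    replace (16 / (INR m - 1) * (INR m * (INR m - 1))) with (16 * INR m) by (field; lra). lra.
  - replace (INR m + 1 - 2) with (INR m - 1) by ring. unfold Rdiv.
    apply Rmult_le_compat_r; [left; apply Rinv_0_lt_compat; lra|]. simpl. nra.
Qed.

Theorem mainTheorem16 (lam : list nat) (A : R) (M : nat) :
  is_composition lam ->
  0 <= A ->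
  (forall a b, is_first_run lam a b -> INR (run_length a b) <= A) ->
  (exists a b, is_interior_run lam a b /\ run_length a b = M) ->
  (forall a b, is_interior_run lam a b -> (run_length a b <= M)%nat) ->
  (2 < M)%nat ->
  forall x : R, 0 <= x <= 1 -> 0 < dens_XF lam x ->
  forall t : R, 0 <= t <= 1 ->
    Rabs (cdf_XI_given_XF lam x t - cdf_XI lam t) <= 4 * A ^ 2 / (INR M - 2).
Proof.
  intros _ _ Hfirst [a [b [Hrun HM]]] _ HM2 x Hx Hdens t Ht.
  destruct (interior_run_shape lam a b Hrun) as [Ha [Hab [Hbn _]]].
  destruct (csize lam) as [|n] eqn:Hn; [lia|].
  assert (HA : 2 <= A).
  { destruct (first_run_exists lam) as [b1 Hb1]; [lia|].
    apply Rle_trans with (INR (run_length 1 b1)); [|now apply Hfirst].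
    apply (le_INR 2), (run_length_ge2 lam), Hb1. }
  rewrite (cdf_XI_given_XF_chain_dens lam n), (cdf_XI_chain_dens lam n) by (auto; lia).
  rewrite (dens_XF_chain_dens lam n) in Hdens by (auto; lia).
  apply Rle_trans with (2 / INR (b - a)).
  - apply pinched_ratio_dist; auto using chain_dens_cont.
    + apply chain_dens_pinched with b; [lia|]. now apply interior_run_pinched.
    + intros. apply chain_dens_ge0. lra.
  - unfold run_length in HM. replace M with (S (b - a)) by lia.
    apply two_div_le_bound; [exact HA|lia].
Qed.
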